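(* Let $T$ be a trunk of an order $P$. Any two chains $C,C'\subseteq T$ that are maximal among the chains contained in $T$ are order-isomorphic (in particular they have the same cardinality). Moreover, if $T$ is a full trunk of $P$, then every element of $T$ belongs to a chain contained in $T$ that is order-isomorphic to a maximum chain of $P$.
   Context: Orders are partial orders; $x\sim y$ means $x\ne y$ and $x,y$ incomparable. A trunk of $P$ is a subset $T$ (with the induced order) such that for all pairwise distinct $x,y,z\in T$, $x\sim y$ and $y\sim z$ imply $x\sim z$. A chain of $P$ is maximum if it is maximal under inclusion and no chain of $P$ has greater cardinality (for a well-founded order: greater order type). A full trunk is a trunk containing at least one maximum chain of $P$. *)

From HB Require Import structures.
From mathcomp Require Import all_boot all_order.
Set Implicit Arguments. Unset Strict Implicit. Unset Printing Implicit Defensive.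
Import Order.TTheory.
Local Open Scope order_scope.

Section Defs.
Context {d : Order.disp_t} {P : porderType d}.

Definition psubset (A B : P -> Prop) : Prop := forall x, A x -> B x.

Definition incomp (x y : P) : Prop := x <> y /\ ~ (x <= y) /\ ~ (y <= x).

Definition trunk (T : P -> Prop) : Prop :=
  forall x y z, T x -> T y -> T z -> x <> y -> y <> z -> x <> z ->
    incomp x y -> incomp y z -> incomp x z.

Definition chain (C : P -> Prop) : Prop :=
  forall x y, C x -> C y -> x <= y \/ y <= x.

Definition maximal_chain_in (S C : P -> Prop) : Prop :=
  chain C /\ psubset C S /\
  forall D, chain D -> psubset D S -> psubset C D -> psubset D C.

Definition order_iso (A B : P -> Prop) : Prop :=
  exists (f : {x | A x} -> {x | B x}) (g : {x | B x} -> {x | A x}),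
    cancel f g /\ cancel g f /\
    forall a b, (proj1_sig a <= proj1_sig b) <-> (proj1_sig (f a) <= proj1_sig (f b)).

Definition card_le (A B : P -> Prop) : Prop :=
  exists f : {x | A x} -> {x | B x}, injective f.

Definition card_gt (D C : P -> Prop) : Prop := card_le C D /\ ~ card_le D C.

Definition wf_order : Prop := well_founded (fun x y : P => x < y).

Definition proper_initial_segment (I D : P -> Prop) : Prop :=
  psubset I D /\ (forall x y, D x -> I y -> x <= y -> I x) /\
  exists z, D z /\ ~ I z.

(* for well-ordered chains: ordertype(D) > ordertype(C) iff C is isomorphic
   to a proper initial segment of D *)
Definition otype_gt (D C : P -> Prop) : Prop :=
  exists I, proper_initial_segment I D /\ order_iso C I.

(* maximum chain: maximal under inclusion, and no chain has greater cardinality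
   (for a well-founded order: greater order type) *)
Definition maximum_chain (C : P -> Prop) : Prop :=
  maximal_chain_in (fun _ => True) C /\
  (wf_order -> forall D, chain D -> ~ otype_gt D C) /\
  (~ wf_order -> forall D, chain D -> ~ card_gt D C).

Definition full_trunk (T : P -> Prop) : Prop :=
  trunk T /\ exists M, maximum_chain M /\ psubset M T.

End Defs.

(* Write  x ≈ y  (sim x y) when neither x < y nor y < x, i.e. x = y or x ~ y.
   The trunk axiom says exactly that ≈ is transitive on T, so ≈ is an
   equivalence relation on T, and < is invariant under ≈ on T.  A chain meets
   every ≈-class in at most one point, and a chain C maximal in T meets every
   ≈-class of T (an element incomparable-free with C could be added to C).
   Hence for maximal chains C, C' of T, sending c to the unique c' ≈ c is an
   order isomorphism C ≅ C' (part one).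
   For part two, let M ⊆ T be a maximum chain and x ∈ T.  The chain
   cut M x = {x} ∪ {y ∈ M | y comparable with x} is again maximal in T; it
   contains x, and by part one it is isomorphic to M. *)
From Stdlib Require Import Classical ClassicalEpsilon ProofIrrelevance.
From HB Require Import structures.
From mathcomp Require Import all_boot all_order.
Set Implicit Arguments. Unset Strict Implicit. Unset Printing Implicit Defensive.
Import Order.TTheory.
Local Open Scope order_scope.

Section Comparability.
Context {d : Order.disp_t} {P : porderType d}.

Definition sim (x y : P) : Prop := ~ (x < y) /\ ~ (y < x).

Definition comparable (x y : P) : Prop := x <= y \/ y <= x.

Lemma sim_refl (x : P) : sim x x.
Proof. by split; rewrite ltxx. Qed.

Lemma sim_sym (x y : P) : sim x y -> sim y x.
Proof. by case. Qed.

Lemma sim_or_lt (x y : P) : sim x y \/ x < y \/ y < x.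
Proof.
case: (boolP (x < y)) => [|/negP nxy]; first by right; left.
case: (boolP (y < x)) => [|/negP nyx]; first by right; right.
by left.
Qed.

Lemma comparable_sim_eq (x y : P) : comparable x y -> sim x y -> x = y.
Proof.
move=> cxy [nxy nyx]; case: cxy; rewrite le_eqVlt => /orP [/eqP //|lt].
- by case: nxy.
- by case: nyx.
Qed.

Lemma not_comparable_sim (x y : P) : ~ comparable x y -> sim x y.
Proof. by move=> ncxy; split=> /ltW ?; apply: ncxy; [left | right]. Qed.

Lemma sim_incomp (x y : P) : x <> y -> sim x y -> incomp x y.
Proof.
move=> nxy sxy; split=> //; split=> le_xy; apply: nxy.
- exact: comparable_sim_eq (or_introl le_xy) sxy.
- exact: comparable_sim_eq (or_intror le_xy) sxy.
Qed.

Lemma incomp_sim (x y : P) : incomp x y -> sim x y.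
Proof. by move=> [_ [nxy nyx]]; split => /ltW. Qed.

Lemma chain_sim_eq (C : P -> Prop) (c c' : P) :
  chain C -> C c -> C c' -> sim c c' -> c = c'.
Proof. by move=> hC cc cc'; apply: comparable_sim_eq; apply: hC. Qed.

Lemma chain_add (C : P -> Prop) (z : P) :
  chain C -> (forall u, C u -> comparable u z) ->
  chain (fun w => C w \/ w = z).
Proof.
move=> hC hz u v [cu|->] [cv|->]; [exact: hC | exact: hz | | by left].
by case: (hz v cv); [right | left].
Qed.

Lemma maximal_add (S C : P -> Prop) (z : P) :
  maximal_chain_in S C -> S z -> (forall u, C u -> comparable u z) -> C z.
Proof.
move=> [hC [hCS hmax]] sz hz.
apply: (hmax _ (chain_add hC hz)); last by right.
- by move=> w [/hCS | ->].
- by move=> w cw; left.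
Qed.

Lemma maximal_chain_in_sub (S C : P -> Prop) :
  maximal_chain_in (fun _ => True) C -> psubset C S -> maximal_chain_in S C.
Proof. by move=> [hC [_ hmax]] hCS; split=> //; split=> // D hD _; apply: hmax. Qed.

Lemma sig_eq (A : P -> Prop) (u v : {x | A x}) :
  proj1_sig u = proj1_sig v -> u = v.
Proof. by case: u v => [u hu] [v hv] /= euv; subst v; rewrite (proof_irrelevance _ hu hv). Qed.

End Comparability.

Section Trunk.
Context {d : Order.disp_t} {P : porderType d}.
Variable T : P -> Prop.
Hypothesis hT : trunk T.

Lemma trunk_sim_trans (x y z : P) :
  T x -> T y -> T z -> sim x y -> sim y z -> sim x z.
Proof.
move=> tx ty tz sxy syz.
have [->|nxy] := eqVneq x y; first exact: syz.
have [<-|nyz] := eqVneq y z; first exact: sxy.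
have [->|nxz] := eqVneq x z; first exact: sim_refl.
apply: incomp_sim; apply: (hT tx ty tz); try exact/eqP.
- exact: sim_incomp (elimN eqP nxy) sxy.
- exact: sim_incomp (elimN eqP nyz) syz.
Qed.

Lemma trunk_lt_sim (a a' b b' : P) : T a -> T a' -> T b -> T b' ->
  sim a a' -> sim b b' -> a < b -> a' < b'.
Proof.
move=> ta ta' tb tb' saa' sbb' lt_ab.
have nsab : ~ sim a b by case.
have sa'b : ~ sim a' b.
  by move=> h; apply: nsab; apply: (trunk_sim_trans ta ta' tb).
have [sa'b'|[//|lt_b'a']] := sim_or_lt a' b'.
  by case: sa'b; apply: (trunk_sim_trans ta' tb' tb _ (sim_sym sbb')).
have [sab'|[lt_ab'|lt_b'a]] := sim_or_lt a b'.
- by case: nsab; apply: (trunk_sim_trans ta tb' tb _ (sim_sym sbb')).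
- by case: saa' => nlt _; case: nlt; apply: lt_trans lt_ab' lt_b'a'.
- by case: sbb' => _ nlt; case: nlt; apply: lt_trans lt_b'a lt_ab.
Qed.

Lemma maximal_sim_exists (C : P -> Prop) (y : P) :
  maximal_chain_in T C -> T y -> exists c, C c /\ sim y c.
Proof.
move=> hC ty; apply: NNPP => noc.
have cy : C y.
  apply: (maximal_add hC ty) => u cu.
  have [syu|[/ltW|/ltW]] := sim_or_lt y u; [by case: noc; exists u|by right|by left].
by apply: noc; exists y; split=> //; apply: sim_refl.
Qed.

Lemma sim_map (C C' : P -> Prop) :
  psubset C T -> maximal_chain_in T C' ->
  exists f : {x | C x} -> {x | C' x}, forall c, sim (proj1_sig c) (proj1_sig (f c)).
Proof.
move=> hCT hC'.
have ex : forall c : {x | C x}, exists c' : {x | C' x}, sim (proj1_sig c) (proj1_sig c').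
  move=> [c cc] /=; have [c' [cc' scc']] := maximal_sim_exists hC' (hCT _ cc).
  by exists (exist _ c' cc').
exists (fun c => proj1_sig (constructive_indefinite_description _ (ex c))) => c.
exact: proj2_sig (constructive_indefinite_description _ (ex c)).
Qed.

Lemma maximal_chains_iso (C C' : P -> Prop) :
  maximal_chain_in T C -> maximal_chain_in T C' -> order_iso C C'.
Proof.
move=> hC hC'; have [hCc [hCT _]] := hC; have [hC'c [hC'T _]] := hC'.
have [f hf] := sim_map hCT hC'; have [g hg] := sim_map hC'T hC.
have tC (c : {x | C x}) : T (proj1_sig c) by apply: hCT; apply: proj2_sig.
have tC' (c : {x | C' x}) : T (proj1_sig c) by apply: hC'T; apply: proj2_sig.
have f_lt a b : proj1_sig a < proj1_sig b -> proj1_sig (f a) < proj1_sig (f b).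
  exact: trunk_lt_sim (tC a) (tC' (f a)) (tC b) (tC' (f b)) (hf a) (hf b).
exists f, g; split; [|split].
- move=> c; apply: sig_eq; symmetry; apply: (chain_sim_eq hCc); try exact: proj2_sig.
  exact: trunk_sim_trans (tC c) (tC' (f c)) (tC (g (f c))) (hf c) (hg (f c)).
- move=> c; apply: sig_eq; symmetry; apply: (chain_sim_eq hC'c); try exact: proj2_sig.
  exact: trunk_sim_trans (tC' c) (tC (g c)) (tC' (f (g c))) (hg c) (hf (g c)).
- move=> a b; split.
  + rewrite le_eqVlt => /orP [/eqP/sig_eq -> //|/f_lt/ltW //].
  + move=> le_fab; case: (hCc _ _ (proj2_sig a) (proj2_sig b)) => //.
    rewrite le_eqVlt => /orP [/eqP/sig_eq -> //|/f_lt].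
    by rewrite lt_leAnge le_fab andbF.
Qed.

Definition cut (M : P -> Prop) (x : P) : P -> Prop :=
  fun y => y = x \/ (M y /\ comparable x y).

Lemma cut_chain (M : P -> Prop) (x : P) : chain M -> chain (cut M x).
Proof.
move=> hM u v [->|[mu cu]] [->|[mv cv]]; [by left | exact: cv | | exact: hM].
by case: cu; [right | left].
Qed.

(* Cutting a maximal chain of T at a point x of T gives a maximal chain of T:
   a point z ≠ x of a larger chain is comparable with every u ∈ M, since
   otherwise u ≈ z, and u ≈ x (u ∉ cut M x) would force z ≈ x. *)
Lemma cut_maximal (M : P -> Prop) (x : P) :
  maximal_chain_in T M -> T x -> maximal_chain_in T (cut M x).
Proof.
move=> hM tx; have [hMc [hMT _]] := hM.
split; first exact: cut_chain.
split; first by move=> u [->|[/hMT]].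
move=> D hD hDT hcutD z dz.
have dx : D x by apply: hcutD; left.
have [<-|nzx] := eqVneq z x; first by left.
have cxz : comparable x z by apply: hD.
right; split=> //.
apply: (maximal_add hM (hDT _ dz)) => u mu.
have [cxu|ncxu] := classic (comparable x u).
  by apply: hD; [apply: hcutD; right | ].
have [suz|[/ltW|/ltW]] := sim_or_lt u z; [|by left|by right].
have sxz : sim x z.
  apply: (trunk_sim_trans tx (hMT _ mu) (hDT _ dz)) => //.
  exact: not_comparable_sim ncxu.
by case/eqP: nzx; symmetry; apply: comparable_sim_eq cxz sxz.
Qed.

End Trunk.

Theorem theorem5p4 (d : Order.disp_t) (P : porderType d) (T : P -> Prop)
  (hT : trunk T) :
  (forall C C' : P -> Prop,
      maximal_chain_in T C -> maximal_chain_in T C' -> order_iso C C') /\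
  (full_trunk T ->
     forall x, T x ->
       exists C : P -> Prop, chain C /\ psubset C T /\ C x /\
         exists M : P -> Prop, maximum_chain M /\ order_iso C M).
Proof.
split=> [C C'|[_ [M [hM hMT]]] x tx]; first exact: maximal_chains_iso.
have hMmax : maximal_chain_in T M := maximal_chain_in_sub (proj1 hM) hMT.
have hcut := cut_maximal hT hMmax tx.
exists (cut M x); split; first exact: (proj1 hcut).
split; first exact: (proj1 (proj2 hcut)).
split; first by left.
by exists M; split=> //; apply: maximal_chains_iso hcut hMmax.
Qed.
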